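(* Let $(S,\mathcal C)$ be a connectoid and $X\subseteq S$ a countably infinite set. The following are equivalent: (i) there is an end $\omega\in\Omega(S,\mathcal C)$ such that $X$ converges to $\omega$; (ii) for every finite $Y\subseteq S$ there is an element of $\mathcal K(S\setminus Y)$ containing almost all elements of $X$; (iii) there is a necklace containing almost all elements of $X$. Moreover, if $(S,\mathcal C)$ is connected, then (i)–(iii) hold if and only if there is a necklace containing all elements of $X$.
   Context: A connectoid is given by a set $S$ and a set $\mathcal F$ of finite subsets of $S$ such that (i) $F\cup F'\in\mathcal F$ whenever $F,F'\in\mathcal F$ and $F\cap F'\neq\emptyset$, and (ii) $\emptyset\in\mathcal F$ and $\{s\}\in\mathcal F$ for every $s\in S$. A set $C\subseteq S$ is connected if for all $x,y\in C$ there is $F\in\mathcal F$ with $F\subseteq C$ and $x,y\in F$; $\mathcal C$ is the set of connected sets; $(S,\mathcal C)$ is connected if $S\in\mathcal C$. For $S'\subseteq S$, a component of $S'$ is a maximal connected subset of $S'$, and $\mathcal K(S')$ is the set of components of $S'$. ''Almost all'' means all but finitely many. A necklace is a connected set $N$ for which there is a family $(H_n)_{n\in\mathbb N}$ of finite connected sets with $N=\bigcup_n H_n$ and $H_i\cap H_j\neq\emptyset$ iff $|i-j|\le 1$. For a necklace $N$ and finite $Z\subseteq S$, the $Z$-tail of $N$ is the unique element of $\mathcal K(N\setminus Z)$ containing almost all elements of $N$. Two necklaces are equivalent if for every finite $Z\subseteq S$ their $Z$-tails lie in the same element of $\mathcal K(S\setminus Z)$. An end is an equivalence class of necklaces; $\Omega(S,\mathcal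 C)$ is the set of ends; $K(Z,\omega)$ is the element of $\mathcal K(S\setminus Z)$ containing the $Z$-tails of all necklaces in $\omega$. An infinite set $X\subseteq S$ converges to an end $\omega$ if $K(Y,\omega)$ contains almost all elements of $X$ for every finite $Y\subseteq S$. *)

From mathcomp Require Import all_boot.
From mathcomp Require Import boolp classical_sets functions cardinality.
Set Implicit Arguments. Unset Strict Implicit. Unset Printing Implicit Defensive.
Local Open Scope classical_set_scope.

(* The ground set S is the whole type T; F is the family \mathcal F. *)
Section Connectoid.
Context {T : Type}.

Definition is_connectoid (F : set (set T)) : Prop :=
  (forall A, F A -> finite_set A) /\
  (forall A B, F A -> F B -> A `&` B !=set0 -> F (A `|` B)) /\
  F set0 /\ (forall s : T, F [set s]).

Definition connected_set (F : set (set T)) (C : set T) : Prop :=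
  forall x y, C x -> C y -> exists A, F A /\ A `<=` C /\ A x /\ A y.

Definition component (F : set (set T)) (S' K : set T) : Prop :=
  K `<=` S' /\ connected_set F K /\
  (forall K', connected_set F K' -> K `<=` K' -> K' `<=` S' -> K' = K).

Definition almost_all_in (X A : set T) : Prop := finite_set (X `\` A).

Definition necklace (F : set (set T)) (N : set T) : Prop :=
  connected_set F N /\
  exists H : nat -> set T,
    (forall n, finite_set (H n) /\ connected_set F (H n)) /\
    N = \bigcup_n H n /\
    (forall i j : nat, H i `&` H j !=set0 <-> (i <= j.+1 /\ j <= i.+1)%N).

Definition tail (F : set (set T)) (N Z t : set T) : Prop :=
  component F (N `\` Z) t /\ almost_all_in N t.

Definition necklace_equiv (F : set (set T)) (N1 N2 : set T) : Prop :=
  forall Z, finite_set Z ->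
    exists K t1 t2, component F (~` Z) K /\
      tail F N1 Z t1 /\ tail F N2 Z t2 /\ t1 `<=` K /\ t2 `<=` K.

Definition is_end (F : set (set T)) (w : set (set T)) : Prop :=
  exists N, necklace F N /\ w = [set N' | necklace F N' /\ necklace_equiv F N N'].

Definition end_component (F : set (set T)) (w : set (set T)) (Z K : set T) : Prop :=
  component F (~` Z) K /\
  forall N, w N -> exists t, tail F N Z t /\ t `<=` K.

Definition converges_to (F : set (set T)) (X : set T) (w : set (set T)) : Prop :=
  forall Y, finite_set Y ->
    exists K, end_component F w Y K /\ almost_all_in X K.

End Connectoid.

From mathcomp Require Import all_boot.
From mathcomp Require Import boolp classical_sets functions cardinality.
From mathcomp Require Import zify.
Set Implicit Arguments. Unset Strict Implicit. Unset Printing Implicit Defensive.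
Local Open Scope classical_set_scope.

(* (iii) => (ii): a finite set Y meets only finitely many beads of a necklace,
   so a tail of the necklace is a connected subset of the complement of Y and
   lies in a single component, which then contains almost all of X.
   (ii) => (iii): choose beads inductively.  Bead n+1 lies in the component L_n
   of the complement of the earlier beads that contains almost all of X, meets
   bead n, and absorbs the points of X lost when passing from L_n to L_(n+1)
   together with the first n points of an enumeration of X still in L_n; hence
   every point of X in L_0 ends up on the necklace, and L_0 = S when S is
   connected.  (ii) => (i): the class of such a necklace is an end, since the
   component of S \ Y holding almost all of X meets the Y-tail of this necklace
   and hence holds the Y-tails of all equivalent ones. *)

Lemma finite_set_ind T (P : set T -> Prop) :
  P set0 -> (forall A x, finite_set A -> P A -> P (x |` A)) ->
  forall A, finite_set A -> P A.
Proof.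
move=> P0 PU A.
elim/Pchoice: T => T in P P0 PU A *.
move=> /finite_seqP[s ->]; elim: s => [|x s IH].
  by rewrite (_ : [set` [::]] = set0) //; apply/seteqP; split.
rewrite (_ : [set` x :: s] = x |` [set` s]); first exact: PU.
apply/seteqP; split => y /=; rewrite inE.
  by case/orP => [/eqP ->|ys]; [left|right].
by case=> [->|ys]; rewrite ?eqxx //= ys orbT.
Qed.

Lemma countable_enum T (X : set T) : countable X -> X !=set0 ->
  exists f : nat -> T, X `<=` range f.
Proof.
move=> /ocard_geP[g] [x0 _].
exists (fun n => odflt x0 (g n)) => x Xx.
have [n _ gn] : range g (Some x) by apply: surj; exists x.
by exists n => //; rewrite gn.
Qed.

Lemma dependent_choice_seq A (P : A -> Prop) (R : nat -> A -> A -> Prop) a0 :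
  P a0 -> (forall n a, P a -> exists2 b, P b & R n a b) ->
  exists u : nat -> A, u 0%N = a0 /\ forall n, P (u n) /\ R n (u n) (u n.+1).
Proof.
move=> Pa0 step.
have next : forall na : nat * A, exists b, P na.2 -> P b /\ R na.1 na.2 b.
  move=> [n a] /=; have [/(step n)[b Pb Rb]|NPa] := pselect (P a).
    by exists b.
  by exists a0 => /NPa.
have [g hg] := choice next.
pose u := fix u n := if n is m.+1 then g (m, u m) else a0.
have Pu n : P (u n) by elim: n => //= n /(hg (n, _))[].
by exists u; split=> // n; split=> //; exact: (hg (n, u n) (Pu n)).2.
Qed.

Lemma eventually_disjoint_finite T (H : nat -> set T) (Y : set T) :
  (forall y, exists m, forall n, (m <= n)%N -> ~ H n y) -> finite_set Y ->
  exists m, forall n, (m <= n)%N -> H n `&` Y = set0.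
Proof.
move=> Hfin; move: Y; apply: finite_set_ind.
  by exists 0%N => n _; rewrite setI0.
move=> Y y _ [mY HY]; have [my Hy] := Hfin y.
exists (maxn mY my) => n; rewrite geq_max => /andP[/HY HYn /Hy Hyn].
by apply/seteqP; split=> // z [Hz [zy|Yz]]; [rewrite zy in Hz|rewrite -HYn].
Qed.

Lemma almost_all_meet T (X A B : set T) : infinite_set X ->
  almost_all_in X A -> almost_all_in X B -> exists x, X x /\ A x /\ B x.
Proof.
move=> Xinf XA XB; apply: contrapT => noX; apply: Xinf.
apply: sub_finite_set (_ : finite_set ((X `\` A) `|` (X `\` B))).
  move=> x Xx; have [Ax|] := pselect (A x); last by left.
  by have [Bx|] := pselect (B x); [case: noX; exists x|right].
by rewrite finite_setU.
Qed.

Lemma almost_all_trans T (X N A : set T) :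
  almost_all_in X N -> almost_all_in N A -> almost_all_in X A.
Proof.
move=> XN NA; apply: sub_finite_set (_ : finite_set ((X `\` N) `|` (N `\` A))).
  by move=> x [Xx nAx]; have [Nx|] := pselect (N x); [right|left].
by rewrite finite_setU.
Qed.

Definition almost_in_components T (F : set (set T)) (X : set T) : Prop :=
  forall Y, finite_set Y -> exists K, component F (~` Y) K /\ almost_all_in X K.

Definition necklace_class T (F : set (set T)) (N : set T) : set (set T) :=
  [set N' | necklace F N' /\ necklace_equiv F N N'].

Section Connectoid.
Context {T : Type} (F : set (set T)).
Hypothesis hF : is_connectoid F.

Lemma connectoid_finite A : F A -> finite_set A.
Proof. by case: hF => h _; apply: h. Qed.

Lemma connectoid_setU A B : F A -> F B -> A `&` B !=set0 -> F (A `|` B).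
Proof. by case: hF => _ [h _]; apply: h. Qed.

Lemma connectoid_set1 x : F [set x].
Proof. by case: hF => _ [_ [_ h]]. Qed.

Lemma connected_connectoid A : F A -> connected_set F A.
Proof. by move=> FA x y Ax Ay; exists A; do !split. Qed.

Lemma component_setT : connected_set F setT -> component F setT setT.
Proof. by move=> cT; split=> //; split=> // K' _ TK' _; apply/seteqP. Qed.

Lemma connected_setU C D : connected_set F C -> connected_set F D ->
  C `&` D !=set0 -> connected_set F (C `|` D).
Proof.
have link C' D' : connected_set F C' -> connected_set F D' ->
    forall p x y, C' p -> D' p -> C' x -> D' y ->
    exists A, F A /\ A `<=` C' `|` D' /\ A x /\ A y.
  move=> cC cD p x y Cp Dp Cx Dy.
  have [A [FA [AC [Ax Ap]]]] := cC x p Cx Cp.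
  have [B [FB [BD [Bp By]]]] := cD p y Dp Dy.
  exists (A `|` B); split; first by apply: connectoid_setU => //; exists p.
  by split; [move=> z [/AC|/BD]; [left|right]|split; [left|right]].
move=> cC cD [p [Cp Dp]] x y [Cx|Dx] [Cy|Dy].
- have [A [FA [AC Axy]]] := cC x y Cx Cy.
  by exists A; split=> //; split=> // z /AC; left.
- exact: link Cp Dp Cx Dy.
- have [A [FA [AD Axy]]] := link _ _ cD cC p x y Dp Cp Dx Cy.
  by exists A; split=> //; split=> // z /AD [|]; [right|left].
- have [A [FA [AD Axy]]] := cD x y Dx Dy.
  by exists A; split=> //; split=> // z /AD; right.
Qed.

Lemma component_absorb S K C : component F S K -> connected_set F C ->
  C `<=` S -> C `&` K !=set0 -> C `<=` K.
Proof.
move=> [KS [cK Kmax]] cC CS CK.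
have CKS : C `|` K `<=` S by move=> z [/CS|/KS].
rewrite -(Kmax _ (connected_setU cC cK CK) (@subsetUr _ C K) CKS).
exact: subsetUl.
Qed.

Lemma component_unique S K K' : component F S K -> component F S K' ->
  K `&` K' !=set0 -> K = K'.
Proof.
move=> cK cK' KK'; apply/seteqP; split.
  by apply: component_absorb cK' _ _ KK'; case: cK => [? []].
by apply: component_absorb cK _ _ _; [case: cK' => [? []]|case: cK'|rewrite setIC].
Qed.

Lemma component_exists S C : connected_set F C -> C `<=` S -> C !=set0 ->
  exists K, component F S K /\ C `<=` K.
Proof.
move=> cC CS [p Cp].
pose K := [set x | exists D, connected_set F D /\ D `<=` S /\ D p /\ D x].
have KS : K `<=` S by move=> x [D [_ [DS [_ /DS]]]].
have cK : connected_set F K.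
  move=> x y [D [cD [DS [Dp Dx]]]] [D' [cD' [D'S [D'p D'y]]]].
  have cDD' := connected_setU cD cD' (ex_intro _ p (conj Dp D'p)).
  have [A [FA [AD [Ax Ay]]]] := cDD' x y (or_introl Dx) (or_intror D'y).
  exists A; split=> //; split=> // z Az; exists (D `|` D'); split=> //.
  by split; [move=> w [/DS|/D'S]|split; [left|exact: AD]].
exists K; split; last by move=> x Cx; exists C.
split=> //; split=> // K' cK' KK' K'S; apply/seteqP; split=> // z K'z.
by exists K'; do !split=> //; apply/KK'; exists C.
Qed.

Lemma connected_extend C q P : connected_set F C -> C q -> finite_set P ->
  P `<=` C -> exists A, F A /\ A `<=` C /\ A q /\ P `<=` A.
Proof.
move=> cC Cq; move: P; apply: finite_set_ind.
  by move=> _; exists [set q]; do !split=> //; [exact: connectoid_set1|move=> z ->].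
move=> P x _ IH xPC.
have [A [FA [AC [Aq PA]]]] := IH (fun z Pz => xPC z (or_intror Pz)).
have [B [FB [BC [Bq Bx]]]] := cC q x Cq (xPC x (or_introl erefl)).
exists (A `|` B); split; first by apply: connectoid_setU => //; exists q.
by do !split; [move=> z [/AC|/BC]|left|move=> z [->|/PA]; [right|left]].
Qed.

Lemma connected_bigcup_chain (H : nat -> set T) m :
  (forall n, connected_set F (H n)) -> (forall n, H n `&` H n.+1 !=set0) ->
  connected_set F (\bigcup_(n in [set n | (m <= n)%N]) H n).
Proof.
move=> cH HH.
pose seg j := \bigcup_(n in [set n | (m <= n <= m + j)%N]) H n.
have cseg j : connected_set F (seg j).
  elim: j => [|j IH].
    rewrite /seg (_ : [set n | _] = [set m]); first by rewrite bigcup_set1.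
    by apply/seteqP; split=> n /=; [rewrite addn0 => ?; lia|move=> ->; lia].
  rewrite /seg (_ : [set n | _] = [set n | (m <= n <= m + j)%N] `|` [set (m + j).+1]).
    rewrite bigcup_setU bigcup_set1; apply: connected_setU => //.
    have [z [z1 z2]] := HH (m + j)%N.
    by exists z; split=> //; exists (m + j)%N => //=; lia.
  by apply/seteqP; split=> n /=; [move=> ?; lia|case=> [?|->]; lia].
move=> x y [a /= ma Hx] [b /= mb Hy].
have segx : seg (a + b)%N x by exists a => //=; lia.
have segy : seg (a + b)%N y by exists b => //=; lia.
have [A [FA [Aseg Axy]]] := cseg (a + b)%N x y segx segy.
exists A; split=> //; split=> // z /Aseg [n /= nb Hz].
by exists n => //=; lia.
Qed.

Lemma necklace_of_chain (H : nat -> set T) :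
  (forall n, finite_set (H n) /\ connected_set F (H n)) ->
  (forall n, H n !=set0) -> (forall n, H n `&` H n.+1 !=set0) ->
  (forall i j, (i.+2 <= j)%N -> H i `&` H j = set0) ->
  necklace F (\bigcup_n H n).
Proof.
move=> Hfc H0 HH Hfar; split.
  rewrite (_ : \bigcup_n H n = \bigcup_(n in [set n | (0 <= n)%N]) H n).
    by apply: connected_bigcup_chain => // n; case: (Hfc n).
  by apply/seteqP; split=> x [n _ Hx]; exists n.
exists H; do 2!split=> //; move=> i j; split.
  move=> HiHj; have : (i.+2 <= j \/ j.+2 <= i \/ i <= j.+1 /\ j <= i.+1)%N by lia.
  case=> [ij|[ji|//]]; exfalso.
    by move: HiHj; rewrite Hfar //; case=> ? [].
  by move: HiHj; rewrite setIC Hfar //; case=> ? [].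
move=> [ij ji]; have : i = j \/ j = i.+1 \/ i = j.+1 by lia.
case=> [<-|[->|->]].
- by have [z Hz] := H0 i; exists z.
- exact: HH.
- by rewrite setIC.
Qed.

Lemma necklace_almost_components X N :
  necklace F N -> almost_all_in X N -> almost_in_components F X.
Proof.
move=> [_ [H [Hfc [-> Hiff]]]] XN Y Yfin.
have H0 n : H n !=set0.
  by have [z [Hz _]] := (Hiff n n).2 (conj (leqnSn n) (leqnSn n)); exists z.
have HH n : H n `&` H n.+1 !=set0 by apply/(Hiff n n.+1); lia.
have [m HmY] : exists m, forall n, (m <= n)%N -> H n `&` Y = set0.
  apply: eventually_disjoint_finite Yfin => y.
  have [[a Hay]|noy] := pselect (exists a, H a y); last first.
    by exists 0%N => n _ Hny; apply: noy; exists n.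
  exists a.+2 => n an Hny.
  by have := (Hiff a n).1 (ex_intro _ y (conj Hay Hny)); lia.
pose Tm := \bigcup_(n in [set n | (m <= n)%N]) H n.
have cTm : connected_set F Tm.
  by apply: connected_bigcup_chain => // n; case: (Hfc n).
have TmY : Tm `<=` ~` Y.
  by move=> z [n /= /HmY HnY Hz] Yz; have : (H n `&` Y) z by []; rewrite HnY.
have [z Hz] := H0 m.
have Tmz : Tm z by exists m => /=.
have [K [cK TmK]] := component_exists cTm TmY (ex_intro _ z Tmz).
exists K; split=> //.
apply: sub_finite_set
  (_ : finite_set ((X `\` \bigcup_n H n) `|` \bigcup_(n in `I_m) H n)).
  move=> x [Xx nKx]; have [[n _ Hnx]|] := pselect ((\bigcup_n H n) x); last by left.
  right; exists n => //=; rewrite ltnNge; apply/negP => mn.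
  by apply: nKx; apply: TmK; exists n.
rewrite finite_setU; split=> //.
by apply: bigcup_finite => // n _; case: (Hfc n).
Qed.

Lemma converges_to_necklace_class X N : infinite_set X ->
  almost_all_in X N -> almost_in_components F X ->
  converges_to F X (necklace_class F N).
Proof.
move=> Xinf XN XK Y Yfin; have [K [cK XK']] := XK Y Yfin.
exists K; split=> //; split=> // N' [_ NN'].
have [K' [t [t' [cK' [[_ Nt] [tail' [tK' t'K']]]]]]] := NN' Y Yfin.
exists t'; split=> //.
have [z [_ [tz Kz]]] := almost_all_meet Xinf (almost_all_trans XN Nt) XK'.
by rewrite -(component_unique cK' cK) //; exists z; split=> //; apply: tK'.
Qed.

End Connectoid.

Section NecklaceConstruction.
Context {T : Type} (F : set (set T)) (X : set T) (f : nat -> T).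
Hypotheses (hF : is_connectoid F) (Xinf : infinite_set X).
Hypotheses (XK : almost_in_components F X) (Xf : X `<=` range f).

Record stage := Stage { used : set T; bead : set T; region : set T }.

Definition stage_ok (s : stage) : Prop :=
  [/\ finite_set (used s), F (bead s), component F (~` used s) (region s),
      almost_all_in X (region s) & bead s `&` region s !=set0].

Definition stage_next (n : nat) (s s' : stage) : Prop :=
  [/\ used s' = used s `|` bead s, bead s' `<=` region s,
      bead s `&` bead s' !=set0, X `&` region s `\` region s' `<=` bead s' &
      forall k, (k <= n)%N -> (X `&` region s) (f k) -> bead s' (f k)].

Lemma stage_step n s : stage_ok s -> exists2 s', stage_ok s' & stage_next n s s'.
Proof.
case=> Ufin FH cL XL [q [Hq Lq]].
have UHfin : finite_set (used s `|` bead s).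
  by rewrite finite_setU; split=> //; exact: connectoid_finite hF _ FH.
have [K [cK XK']] := XK UHfin.
have KL : K `<=` region s.
  apply: (component_absorb hF cL); first by case: cK => _ [].
    by case: cK => KS _ z /KS nz Uz; apply: nz; left.
  by have [z [_ [Kz Lz]]] := almost_all_meet Xinf XK' XL; exists z.
have [r [_ [Kr _]]] := almost_all_meet Xinf XK' XK'.
pose P := (X `&` region s `\` K) `|` (region s `&` f @` `I_n.+1) `|` [set r].
have Pfin : finite_set P.
  rewrite !finite_setU; do !split; last exact: finite_set1.
    by apply: sub_finite_set XK' => x [[]].
  by apply: sub_finite_set (finite_image f (finite_II n.+1)) => x [].
have PL : P `<=` region s by move=> x [[[[_ ?] _]|[]]|->] //; exact: KL.
have [A [FA [AL [Aq PA]]]] :=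
  connected_extend hF (proj1 (proj2 cL)) Lq Pfin PL.
exists (Stage (used s `|` bead s) A K).
  by split=> //; exists r; split=> //; apply: PA; right.
split=> //; first by exists q.
  by move=> x XLK; apply: PA; left; left.
by move=> k kn XLk; apply: PA; left; right; split; [case: XLk|exists k].
Qed.

Lemma necklace_through L0 : component F (~` set0) L0 -> almost_all_in X L0 ->
  exists N, necklace F N /\ X `&` L0 `<=` N.
Proof.
move=> cL0 XL0; have [r0 [_ [L0r0 _]]] := almost_all_meet Xinf XL0 XL0.
have ok0 : stage_ok (Stage set0 [set r0] L0).
  by split=> //; [exact: (connectoid_set1 hF r0)|exists r0].
have [u [u0 hu]] := dependent_choice_seq ok0 stage_step.
pose H n := bead (u n).
have used_bead i k : (i < k)%N -> H i `<=` used (u k).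
  elim: k => // k IH; have [_ [-> _ _ _ _]] := hu k.
  by rewrite ltnS leq_eqVlt => /orP[/eqP->|/IH HU]; [right|move=> z /HU; left].
have bead_fresh n : H n.+1 `<=` ~` used (u n).
  by have [[_ _ [LU _] _ _] [_ HL _ _ _]] := hu n; move=> z /HL /LU.
exists (\bigcup_n H n); split.
  apply: (necklace_of_chain hF) => [n|n|n|i j ij].
  - have [_ FH _ _ _] := (hu n).1.
    by split; [exact: connectoid_finite hF _ FH|exact: connected_connectoid].
  - by have [_ _ _ _ [z [Hz _]]] := (hu n).1; exists z.
  - by have [_ _ HH _ _] := (hu n).2.
  - case: j ij => // j ij; apply/seteqP; split=> // z [Hiz Hjz].
    exact: bead_fresh Hjz (used_bead i j _ z Hiz).
move=> x [Xx L0x]; have [k _ fk] := Xf Xx.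
apply: contrapT => notN.
have region_x j : region (u j) x.
  elim: j => [|j IH]; first by rewrite u0.
  apply: contrapT => nL; apply: notN; exists j.+1 => //.
  by have [_ _ _ lost _] := (hu j).2; apply: lost.
apply: notN; exists k.+1 => //; rewrite -fk.
have [_ _ _ _ catch] := (hu k).2.
by apply: catch => //; rewrite fk.
Qed.

End NecklaceConstruction.

Theorem proposition2p2 (T : Type) (F : set (set T)) (X : set T) :
  is_connectoid F -> countable X -> infinite_set X ->
  ((exists w, is_end F w /\ converges_to F X w) <->
     (forall Y, finite_set Y -> exists K, component F (~` Y) K /\ almost_all_in X K)) /\
  ((forall Y, finite_set Y -> exists K, component F (~` Y) K /\ almost_all_in X K) <->
     (exists N, necklace F N /\ almost_all_in X N)) /\
  (connected_set F setT ->
     ((exists w, is_end F w /\ converges_to F X w) <->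
        (exists N, necklace F N /\ X `<=` N))).
Proof.
move=> hF Xcount Xinf; have [f Xf] := countable_enum Xcount (infinite_setN0 Xinf).
have i_ii : (exists w, is_end F w /\ converges_to F X w) -> almost_in_components F X.
  by move=> [w [_ Xw]] Y Yfin; have [K [[cK _] XK]] := Xw Y Yfin; exists K.
have ii_iii : almost_in_components F X -> exists N, necklace F N /\ almost_all_in X N.
  move=> XK; have [L0 [cL0 XL0]] := XK set0 (finite_set0 T).
  have [N [nN XL0N]] := necklace_through hF Xinf XK Xf cL0 XL0.
  exists N; split=> //; apply: sub_finite_set XL0 => x [Xx nNx].
  by split=> // L0x; apply/nNx/XL0N.
have iii_ii : (exists N, necklace F N /\ almost_all_in X N) -> almost_in_components F X.
  by move=> [N [nN XN]]; apply: (necklace_almost_components hF nN XN).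
have ii_i : almost_in_components F X -> exists w, is_end F w /\ converges_to F X w.
  move=> XK; have [N [nN XN]] := ii_iii XK.
  by exists (necklace_class F N); split; [exists N|exact: converges_to_necklace_class].
split; first by split.
split; first by split.
move=> cT; split.
  move/i_ii => XK; have XT : almost_all_in X setT by rewrite /almost_all_in setDT.
  have whole : component F (~` set0) setT by rewrite setC0; exact: component_setT.
  have [N [nN XN]] := necklace_through hF Xinf XK Xf whole XT.
  by exists N; split=> // x Xx; apply: XN.
move=> [N [nN XN]]; apply/ii_i/iii_ii; exists N; split=> //.
by rewrite /almost_all_in (_ : X `\` N = set0) // setD_eq0.
Qed.
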